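(* Let $T$ be a tree on $n\ge3$ vertices, let $M$ be its order-$4$ Steiner distance hypermatrix, and let $A=\frac{2}{n}J_n-I_n$. Define the order-$4$ multilinear forms $C_1(\mathbf{x}_1,\mathbf{x}_2,\mathbf{x}_3,\mathbf{x}_4)=M(\mathbf{x}_1,\mathbf{x}_2,\mathbf{x}_3,A\mathbf{x}_4)$ and $C_3(\mathbf{x}_1,\mathbf{x}_2,\mathbf{x}_3,\mathbf{x}_4)=M(\mathbf{x}_1,A\mathbf{x}_2,A\mathbf{x}_3,A\mathbf{x}_4)$. Then $C_1+C_3$ is positive definite: $(C_1+C_3)(\mathbf{v},\mathbf{v},\mathbf{v},\mathbf{v})>0$ for every nonzero $\mathbf{v}\in\mathbb{R}^n$.
   Context: $T$ is a tree with vertex set $\{1,\dots,n\}$. For $U\subseteq V(T)$, the Steiner distance $S(U)$ is the minimum number of edges of a connected subgraph of $T$ whose vertex set contains $U$. The order-$4$ Steiner distance hypermatrix $M$ has entries $M_{(i_1,\dots,i_4)}=S(\{i_1,\dots,i_4\})$, and $M(\mathbf{x}_1,\dots,\mathbf{x}_4)=\sum_{\mathbf{i}\in V(T)^4}M_{\mathbf{i}}\prod_{j=1}^4 x_{j i_j}$. $J_n$ is the $n\times n$ all-ones matrix and $I_n$ the identity matrix. *)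

From HB Require Import structures.
From mathcomp Require Import all_boot all_order all_algebra.
Set Implicit Arguments. Unset Strict Implicit. Unset Printing Implicit Defensive.
Import Order.TTheory GRing.Theory Num.Theory.

Definition simple_graph n (e : rel 'I_n) : Prop :=
  symmetric e /\ irreflexive e.

Definition connected_graph n (e : rel 'I_n) : Prop :=
  forall x y : 'I_n, connect e x y.

Definition acyclic_graph n (e : rel 'I_n) : Prop :=
  forall c : seq 'I_n, 3 <= size c -> ~~ ucycleb e c.

Definition is_tree n (e : rel 'I_n) : Prop :=
  [/\ simple_graph e, connected_graph e & acyclic_graph e].

Definition is_subgraph n (e : rel 'I_n) (W : {set 'I_n}) (F : {set {set 'I_n}}) : bool :=
  [forall f in F, (f \subset W) &&
     [exists x, exists y, (x != y) && e x y && (f == [set x; y])]].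

Definition subgraph_adj n (W : {set 'I_n}) (F : {set {set 'I_n}}) : rel 'I_n :=
  fun x y => [&& x \in W, y \in W & [set x; y] \in F].

Definition subgraph_connected n (W : {set 'I_n}) (F : {set {set 'I_n}}) : bool :=
  [forall x in W, forall y in W, connect (subgraph_adj W F) x y].

Definition steiner_feasible n (e : rel 'I_n) (U W : {set 'I_n}) (F : {set {set 'I_n}}) : bool :=
  [&& is_subgraph e W F, subgraph_connected W F & U \subset W].

(* The default value n of the minimum is never
   attained for a connected graph (a spanning tree has n-1 < n edges). *)
Definition steiner n (e : rel 'I_n) (U : {set 'I_n}) : nat :=
  \big[minn/n]_(W : {set 'I_n})
    \big[minn/n]_(F : {set {set 'I_n}} | steiner_feasible e U W F) #|F|.

Local Open Scope ring_scope.

Definition steiner_form (R : ringType) n (e : rel 'I_n)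
    (x1 x2 x3 x4 : 'cV[R]_n) : R :=
  \sum_(i1 < n) \sum_(i2 < n) \sum_(i3 < n) \sum_(i4 < n)
    (steiner e [set i1; i2; i3; i4])%:R
      * x1 i1 0 * x2 i2 0 * x3 i3 0 * x4 i4 0.

Definition matA (R : fieldType) n : 'M[R]_n :=
  (2 / n%:R) *: const_mx 1 - 1%:M.

Definition C1 (R : fieldType) n (e : rel 'I_n) (x1 x2 x3 x4 : 'cV[R]_n) : R :=
  steiner_form e x1 x2 x3 (matA R n *m x4).

Definition C3 (R : fieldType) n (e : rel 'I_n) (x1 x2 x3 x4 : 'cV[R]_n) : R :=
  steiner_form e x1 (matA R n *m x2) (matA R n *m x3) (matA R n *m x4).

(* In a tree, a minimum connected subgraph containing U consists exactly of the
   edges separating U, so the Steiner distance of U counts those edges.  The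
   Steiner form therefore splits into a sum over edges: an edge with components
   L and ~: L contributes the product of the four totals minus the products of
   the masses on L and on ~: L.  The matrix A = (2/n) J - I preserves the total s
   and sends the mass a of L to 2 s t - a, where t = |L|/n lies strictly between
   0 and 1; the contribution of each edge to C1 + C3 then becomes
   2 s^4 (1 - t^4 - (1 - t)^4) + 4 (a - s t)^4.  All of these vanish only when
   s = 0 and every side mass vanishes, which forces v = 0. *)

From HB Require Import structures.
From mathcomp Require Import all_boot all_order all_algebra.
From mathcomp Require Import ring.
Import Order.TTheory GRing.Theory Num.Theory.
Set Implicit Arguments. Unset Strict Implicit. Unset Printing Implicit Defensive.

Lemma connect_stable (T : finType) (r : rel T) (S : pred T) a b :
  (forall u w, S u -> r u w -> S w) -> S a -> connect r a b -> S b.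
Proof.
move=> stS + /connectP[p + ->]; elim: p a => //= c p IHp a Sa /andP[rac pc].
exact: IHp (stS _ _ Sa rac) pc.
Qed.

Lemma set2_eqP (T : finType) (a b x y : T) :
  [set a; b] = [set x; y] -> (a = x /\ b = y) \/ (a = y /\ b = x).
Proof.
move=> eq2; have /set2P[] : a \in [set x; y] by rewrite -eq2 set21.
all: have /set2P[] : b \in [set x; y] by rewrite -eq2 set22.
all: have /set2P[] : x \in [set a; b] by rewrite eq2 set21.
all: have /set2P[] : y \in [set a; b] by rewrite eq2 set22.
all: by move=> *; subst; auto.
Qed.

Lemma steiner_le_feasible n (e : rel 'I_n) U W F :
  steiner_feasible e U W F -> (steiner e U <= #|F|)%N.
Proof.
move=> feas; rewrite /steiner -minEnat.
apply: leq_trans (@bigmin_le _ nat _ _ W _) _; exact: (@bigmin_le_cond _ nat).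
Qed.

Lemma steiner_ge n (e : rel 'I_n) U m : (m <= n)%N ->
  (forall W F, steiner_feasible e U W F -> m <= #|F|)%N -> (m <= steiner e U)%N.
Proof.
move=> mn mF; rewrite /steiner -minEnat.
by apply: (@le_bigmin _ nat) => // W _; apply: (@le_bigmin _ nat) => // F /mF.
Qed.

Definition splits (T : finType) (L U : {set T}) :=
  (U :&: L != set0) && (U :&: ~: L != set0).

Section Tree.
Variables (n : nat) (e : rel 'I_n).
Hypothesis tree_e : is_tree e.

Lemma tree_sym : symmetric e. Proof. by case: tree_e => [[]]. Qed.
Lemma tree_irr : irreflexive e. Proof. by case: tree_e => [[]]. Qed.
Lemma tree_connect x y : connect e x y. Proof. by case: tree_e => _ /(_ x y). Qed.

Lemma tree_neq x y : e x y -> x != y.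
Proof. by apply: contraTneq => ->; rewrite tree_irr. Qed.

Lemma tree_set2 a b x y : [set a; b] = [set x; y] -> e x y -> e a b.
Proof. by case/set2_eqP=> [[-> ->] | [-> ->]] //; rewrite tree_sym. Qed.

Definition del_edge x y : rel 'I_n := fun a b => e a b && ([set a; b] != [set x; y]).

Definition side x y : {set 'I_n} := [set w | connect (del_edge x y) x w].

Lemma sideE x y w : (w \in side x y) = connect (del_edge x y) x w.
Proof. by rewrite inE. Qed.

Lemma mem_side x y : x \in side x y.
Proof. by rewrite inE connect0. Qed.

Lemma side_closed x y a b :
  a \in side x y -> e a b -> [set a; b] != [set x; y] -> b \in side x y.
Proof.
rewrite !inE => xa eab ne; apply: connect_trans xa (connect1 _).
by rewrite /del_edge eab ne.
Qed.

(* A path from x to y avoiding the edge xy would close a cycle through xy. *)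
Lemma notin_side x y : e x y -> y \notin side x y.
Proof.
move=> exy; rewrite inE; apply/negP => /connectP[p ppath lp].
case: (shortenP ppath) lp => q qpath uq _ lq.
have epath : path e x q by apply: sub_path qpath => a b /andP[].
case: q => [|a [|b q]] in qpath uq epath lq *.
- by move: (tree_neq exy); rewrite lq eqxx.
- by case/andP: qpath => /andP[_]; rewrite lq eqxx.
case: tree_e => _ _ /(_ [:: x, a, b & q] isT).
rewrite /ucycleb uq andbT /cycle rcons_path epath /=.
by move: lq => /= <-; rewrite tree_sym exy.
Qed.

Lemma del_edge_sym x y : symmetric (del_edge x y).
Proof. by move=> a b; rewrite /del_edge tree_sym setUC. Qed.

Lemma del_edgeC x y : del_edge y x =2 del_edge x y.
Proof. by move=> a b; rewrite /del_edge [[set y; x]]setUC. Qed.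

Lemma sideC x y : e x y -> side y x = ~: side x y.
Proof.
move=> exy; apply/setP => w; rewrite in_setC.
have : (w \in side x y) || (w \in side y x).
  pose S u := (u \in side x y) || (u \in side y x).
  apply: (connect_stable (S := S) _ _ (tree_connect x w)); last first.
    by rewrite /S (mem_side x y).
  move=> u u'; rewrite /S => uS euu'.
  have [/set2_eqP[][_ ->]|ne] := eqVneq [set u; u'] [set x; y].
  - by rewrite (mem_side y x) orbT.
  - by rewrite (mem_side x y).
  case/orP: uS => uS; first by rewrite (side_closed uS euu').
  by rewrite (side_closed uS euu') ?orbT // [[set y; x]]setUC.
have disj : w \in side x y -> w \notin side y x.
  rewrite !inE => wxy; apply: contra (notin_side exy); rewrite inE => wyx.
  apply: (connect_trans wxy).
  by rewrite (sym_connect_sym (@del_edge_sym x y)) -(eq_connect (del_edgeC x y)).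
case/orP=> [wxy|wyx]; first by rewrite wxy (negPf (disj wxy)).
by rewrite wyx; case: (boolP (w \in side x y)) => // /disj; rewrite wyx.
Qed.

Lemma side_sub z y y' : e z y -> e z y' -> y != y' -> side y' z \subset side z y.
Proof.
move=> ezy ezy' neq; apply/subsetP => w wS.
have zS : z \notin side y' z by rewrite notin_side // tree_sym.
suff /andP[] : (w \in side y' z) && (w \in side z y) by [].
pose S u := (u \in side y' z) && (u \in side z y).
rewrite inE in wS; apply: (connect_stable (S := S) _ _ wS).
  move=> u u'; rewrite /S => /andP[uS' uS] /andP[eu ne].
  have u'S' := side_closed uS' eu ne.
  rewrite u'S' (side_closed uS eu) //; apply: contraNneq zS => /set2_eqP[][uz u'z].
  - by rewrite -[X in X \in _]uz.
  - by rewrite -[X in X \in _]u'z.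
rewrite /S (mem_side y' z) (side_closed (mem_side z y) ezy') //.
apply/negP => /eqP/set2_eqP[][_ y'y]; first by rewrite y'y eqxx in neq.
by rewrite -y'y tree_irr in ezy'.
Qed.

Lemma side_neighbour_eq z y y' w :
  e z y -> e z y' -> w \in side y z -> w \in side y' z -> y = y'.
Proof.
move=> ezy ezy' wy wy'; apply/eqP/negPn/negP => neq.
have := subsetP (side_sub ezy ezy' neq) _ wy'.
have eyz : e y z by rewrite tree_sym.
by rewrite (sideC eyz) inE wy.
Qed.

Lemma side_neighbour_cover z w : w != z -> exists2 y, e z y & w \in side y z.
Proof.
move=> wz; suff : (w == z) || [exists y, e z y && (w \in side y z)].
  by rewrite (negPf wz) => /existsP[y /andP[]]; exists y.
pose S u := (u == z) || [exists y, e z y && (u \in side y z)].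
apply: (connect_stable (S := S) _ _ (tree_connect z w)); last by rewrite /S eqxx.
move=> u u'; rewrite /S => /orP[/eqP-> ezu'|/existsP[y /andP[ezy uS]] euu'].
  by apply/orP; right; apply/existsP; exists u'; rewrite ezu' (mem_side u' z).
have [/set2_eqP[][_ ->]|ne] := eqVneq [set u; u'] [set y; z].
- by rewrite eqxx.
- by apply/orP; right; apply/existsP; exists y; rewrite ezy (mem_side y z).
- by apply/orP; right; apply/existsP; exists y; rewrite ezy (side_closed uS euu' ne).
Qed.

Definition edges : {set 'I_n * 'I_n} :=
  [set k : 'I_n * 'I_n | (k.1 < k.2)%N && e k.1 k.2].

Definition pair_set (k : 'I_n * 'I_n) : {set 'I_n} := [set k.1; k.2].

Lemma edge_rel k : k \in edges -> e k.1 k.2.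
Proof. by rewrite inE => /andP[]. Qed.

Lemma edge_of a b : e a b -> exists2 k, k \in edges & pair_set k = [set a; b].
Proof.
move=> eab; case: (ltngtP a b) => [ab|ba|/val_inj ab].
- by exists (a, b); rewrite // inE ab eab.
- exists (b, a); first by rewrite inE /= ba tree_sym.
  by rewrite /pair_set setUC.
- by move: eab; rewrite ab tree_irr.
Qed.

Lemma pair_set_inj : {in edges &, injective pair_set}.
Proof.
move=> [x y] [x' y'] /[!inE] /andP[/= lt _] /andP[/= lt' _].
rewrite /pair_set /= => /set2_eqP[[-> ->] // | [xy' yx']].
by rewrite yx' in lt; move: (ltn_trans lt lt'); rewrite -xy' ltnn.
Qed.

(* The endpoint of [k] away from [r]; it determines [k], so a tree has at most
   [n] edges. *)
Definition far_end (r : 'I_n) (k : 'I_n * 'I_n) :=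
  if r \in side k.1 k.2 then k.2 else k.1.

Lemma far_endP r k : k \in edges -> exists o,
  [/\ e (far_end r k) o, r \in side o (far_end r k) & pair_set k = [set far_end r k; o]].
Proof.
case: k => x y /edge_rel /= exy; rewrite /far_end /pair_set /=.
case: ifP => rS.
- by exists x; rewrite tree_sym exy rS setUC.
- by exists y; rewrite exy (sideC exy) inE rS.
Qed.

Lemma card_edges_le : (#|edges| <= n)%N.
Proof.
have [-> | [k _]] := set_0Vmem edges; first by rewrite cards0.
rewrite -[n in (_ <= n)%N]card_ord.
apply: (@leq_card_in _ _ (far_end k.1) edges) => k1 k2 k1E k2E eq12.
have [o1 [e1 r1 p1]] := far_endP k.1 k1E.
have [o2 [e2 r2 p2]] := far_endP k.1 k2E.
rewrite -eq12 in e2 r2 p2.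
by apply: pair_set_inj => //; rewrite p1 p2 (side_neighbour_eq e1 e2 r1 r2).
Qed.

Lemma exists_edge : (1 < n)%N -> exists k, k \in edges.
Proof.
move=> n1; pose z : 'I_n := Ordinal (ltnW n1); pose w : 'I_n := Ordinal n1.
have [|y ezy _] := @side_neighbour_cover z w; first by rewrite -val_eqE.
by have [k kE _] := edge_of ezy; exists k.
Qed.

Definition sep_edges U := [set k in edges | splits (side k.1 k.2) U].

Lemma mem_sep_edges U k :
  (k \in sep_edges U) = (k \in edges) && splits (side k.1 k.2) U.
Proof. by rewrite inE. Qed.

Lemma subgraph_edge W F f : is_subgraph e W F -> f \in F ->
  exists2 k, k \in edges & f = pair_set k.
Proof.
move=> /forall_inP sub /sub /andP[_ /existsP[a /existsP[b /andP[/andP[_ eab] /eqP ->]]]].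
by have [k kE <-] := edge_of eab; exists k.
Qed.

Lemma subgraph_rel W F a b : is_subgraph e W F -> [set a; b] \in F -> e a b.
Proof.
by move=> subg /(subgraph_edge subg)[k /edge_rel ek abk]; apply: tree_set2 abk ek.
Qed.

Lemma sep_edge_mem U W F k :
  steiner_feasible e U W F -> k \in sep_edges U -> pair_set k \in F.
Proof.
case: k => x y /and3P[subg conn UW].
rewrite mem_sep_edges => /andP[_ /andP[/set0Pn[u /setIP[uU ux]]]].
move=> /set0Pn[r /setIP[rU rx]].
apply/negPn/negP => xyF; move: rx; rewrite in_setC => /negP; apply.
have uW := subsetP UW _ uU; have rW := subsetP UW _ rU.
rewrite /= sideE in ux; rewrite sideE /=; apply: (connect_trans ux).
apply: connect_sub (forall_inP (forall_inP conn u uW) r rW) => a b /and3P[_ _ abF].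
apply: connect1; rewrite /del_edge (subgraph_rel subg abF).
by apply: contraNneq xyF; rewrite /pair_set /= => <-.
Qed.

Lemma card_sep_edges_le U W F :
  steiner_feasible e U W F -> (#|sep_edges U| <= #|F|)%N.
Proof.
move=> feas; rewrite -(card_in_imset (f := pair_set)); last first.
  by move=> k k'; rewrite !mem_sep_edges => /andP[kE _] /andP[k'E _]; apply: pair_set_inj.
apply/subset_leq_card/subsetP => _ /imsetP[k kS ->]; exact: sep_edge_mem feas kS.
Qed.

(* Cutting a connected subgraph along the boundary of [S]: connectivity survives
   as long as every edge leaving [S] starts from the same vertex [p]. *)
Lemma feasible_restrict U W F (S : {set 'I_n}) p :
  steiner_feasible e U W F -> U \subset S ->
  (forall a b, a \in S -> b \notin S -> e a b -> a = p) ->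
  steiner_feasible e U (W :&: S) [set f in F | f \subset S].
Proof.
move=> /and3P[subg conn UW] US cross; apply/and3P; split; last by rewrite subsetI UW.
  apply/forall_inP => f /[!inE] /andP[fF fS].
  by have /andP[fW ->] := forall_inP subg f fF; rewrite subsetI fW fS.
apply/forall_inP => a /[!inE] /andP[aW aS]; apply/forall_inP => b /[!inE] /andP[bW bS].
set adj := subgraph_adj _ _.
have inS u : connect adj a u -> u \in S.
  apply: (connect_stable (S := fun v => v \in S)) => // v w _.
  by rewrite /adj /subgraph_adj !inE => /and3P[_ /andP[]].
have step u w : u \in S -> w \in S -> subgraph_adj W F u w -> adj u w.
  rewrite /adj /subgraph_adj !inE => uS wS /and3P[-> -> uwF].
  by rewrite uS wS uwF subUset !sub1set uS wS.
pose P w := connect adj a w || connect adj a p && (w \notin S).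
suff : P b by rewrite /P bS andbF orbF.
apply: (connect_stable (S := P) _ _ (forall_inP (forall_inP conn a aW) b bW)).
  move=> u w; rewrite /P => uP uw; have /and3P[_ _ /(subgraph_rel subg) euw] := uw.
  case/orP: uP => [au|/andP[ap uS]].
    have uS := inS u au; have [wS|wS] := boolP (w \in S).
      by rewrite (connect_trans au (connect1 (step u w uS wS uw))).
    by rewrite -(cross u w uS wS euw) au orbT.
  have [wS|wS] := boolP (w \in S); last by apply/orP; right; apply/andP.
  by rewrite (cross w u wS uS) ?ap // tree_sym.
by rewrite /P connect0.
Qed.

Lemma feasible_cut U W F x y :
  steiner_feasible e U W F -> e x y -> [set x; y] \in F -> U \subset side x y ->
  exists W' F', steiner_feasible e U W' F' /\ (#|F'| < #|F|)%N.
Proof.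
move=> feas exy xyF US; exists (W :&: side x y), [set f in F | f \subset side x y].
split.
  apply: (feasible_restrict (p := x) feas US) => a b aS bS eab.
  have [/set2_eqP[[]//|[ay _]]|ne] := eqVneq [set a; b] [set x; y].
    by move: aS; rewrite ay (negPf (notin_side exy)).
  by rewrite (side_closed aS eab ne) in bS.
apply/proper_card/properP; split; first by apply/subsetP => f /[!inE] /andP[].
exists [set x; y]; first exact: xyF.
rewrite inE xyF /=; apply/subsetPn; exists y; first by rewrite !inE eqxx orbT.
exact: notin_side.
Qed.

Lemma feasible_shrink U W F : steiner_feasible e U W F ->
  ~~ (F \subset pair_set @: sep_edges U) ->
  exists W' F', steiner_feasible e U W' F' /\ (#|F'| < #|F|)%N.
Proof.
move=> feas /subsetPn[f fF fNsep]; have /and3P[subg _ _] := feas.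
have [[x y] kE fk] := subgraph_edge subg fF.
have exy : e x y := edge_rel kE.
rewrite fk /pair_set /= in fF.
have : ~~ splits (side x y) U.
  by apply: contra fNsep => sp; rewrite fk; apply: imset_f; rewrite inE kE.
rewrite /splits negb_and !negbK !setI_eq0 !disjoints_subset setCK => /orP[US|US].
  have eyx : e y x by rewrite tree_sym.
  by apply: (feasible_cut feas eyx); [rewrite setUC | rewrite (sideC exy)].
exact: feasible_cut feas exy fF US.
Qed.

Lemma feasible_full U : steiner_feasible e U setT (pair_set @: edges).
Proof.
apply/and3P; split; last exact: subsetT.
  apply/forall_inP => _ /imsetP[k kE ->]; rewrite subsetT /=.
  apply/existsP; exists k.1; apply/existsP; exists k.2.
  by rewrite (tree_neq (edge_rel kE)) (edge_rel kE) eqxx.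
apply/forall_inP => a _; apply/forall_inP => b _.
apply: connect_sub (tree_connect a b) => u w euw; apply: connect1.
have [k kE kuw] := edge_of euw.
by rewrite /subgraph_adj !inE -kuw imset_f.
Qed.

Lemma steiner_tree U : steiner e U = #|sep_edges U|.
Proof.
apply/eqP; rewrite eqn_leq; apply/andP; split; last first.
  apply: steiner_ge => [|W F]; last exact: card_sep_edges_le.
  apply: leq_trans card_edges_le.
  by apply/subset_leq_card/subsetP => k; rewrite mem_sep_edges => /andP[].
pose P (p : {set 'I_n} * {set {set 'I_n}}) := steiner_feasible e U p.1 p.2.
have full : P (setT, pair_set @: edges) by exact: feasible_full.
case: (arg_minnP (fun p : {set 'I_n} * {set {set 'I_n}} => #|p.2|) full).
move=> [W F] /= feas Fmin.
apply: leq_trans (steiner_le_feasible feas) _.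
have sub : F \subset pair_set @: sep_edges U.
  apply/negPn/negP => /(feasible_shrink feas)[W' [F' [feas' lt]]].
  by move: (Fmin (W', F') feas'); rewrite leqNgt lt.
exact: leq_trans (subset_leq_card sub) (leq_imset_card _ _).
Qed.
Lemma card_sep_edgesE U :
  #|sep_edges U| = (\sum_(k in edges) splits (side k.1 k.2) U)%N.
Proof.
rewrite -sum1_card (eq_bigl _ _ (mem_sep_edges U)) big_mkcondr /=.
by apply: eq_bigr => k _; case: splits.
Qed.
End Tree.

Local Open Scope ring_scope.

Section Forms.
Variables (R : comRingType) (n : nat).
Implicit Types (L : {set 'I_n}) (x : 'cV[R]_n).

(* [steiner_form e] is [mform] with the Steiner distances as coefficients. *)
Definition mform (c : 'I_n -> 'I_n -> 'I_n -> 'I_n -> R) x1 x2 x3 x4 :=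
  \sum_(i1 < n) \sum_(i2 < n) \sum_(i3 < n) \sum_(i4 < n)
    c i1 i2 i3 i4 * x1 i1 0 * x2 i2 0 * x3 i3 0 * x4 i4 0.

Lemma eq_mform c c' x1 x2 x3 x4 :
  (forall i1 i2 i3 i4, c i1 i2 i3 i4 = c' i1 i2 i3 i4) ->
  mform c x1 x2 x3 x4 = mform c' x1 x2 x3 x4.
Proof. by move=> cc'; rewrite /mform; do 4!(apply: eq_bigr => ? _); rewrite cc'. Qed.

Lemma mformB c c' x1 x2 x3 x4 :
  mform (fun i1 i2 i3 i4 => c i1 i2 i3 i4 - c' i1 i2 i3 i4) x1 x2 x3 x4 =
  mform c x1 x2 x3 x4 - mform c' x1 x2 x3 x4.
Proof. by rewrite /mform; do 4!(rewrite -sumrB; apply: eq_bigr => ? _); ring. Qed.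

Lemma mform_sum (I : eqType) (r : seq I) (P : pred I) c x1 x2 x3 x4 :
  mform (fun i1 i2 i3 i4 => \sum_(k <- r | P k) c k i1 i2 i3 i4) x1 x2 x3 x4 =
  \sum_(k <- r | P k) mform (c k) x1 x2 x3 x4.
Proof.
rewrite /mform.
under eq_bigr => i1 _ do under eq_bigr => i2 _ do under eq_bigr => i3 _ do
  under eq_bigr => i4 _ do rewrite !big_distrl.
under eq_bigr => i1 _ do under eq_bigr => i2 _ do under eq_bigr => i3 _ do
  rewrite exchange_big.
under eq_bigr => i1 _ do under eq_bigr => i2 _ do rewrite exchange_big.
under eq_bigr => i1 _ do rewrite exchange_big.
by rewrite exchange_big.
Qed.

Lemma sum4_mul (g1 g2 g3 g4 : 'I_n -> R) :
  \sum_(i1 < n) \sum_(i2 < n) \sum_(i3 < n) \sum_(i4 < n) g1 i1 * g2 i2 * g3 i3 * g4 i4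
  = (\sum_i g1 i) * (\sum_i g2 i) * (\sum_i g3 i) * (\sum_i g4 i).
Proof.
have sumrM (g : 'I_n -> R) c : \sum_i c * g i = c * \sum_i g i by rewrite big_distrr.
have sumMr (g : 'I_n -> R) c : \sum_i g i * c = (\sum_i g i) * c by rewrite big_distrl.
under eq_bigr => i1 _ do under eq_bigr => i2 _ do under eq_bigr => i3 _ do rewrite sumrM.
under eq_bigr => i1 _ do under eq_bigr => i2 _ do rewrite sumMr sumrM.
under eq_bigr => i1 _ do rewrite sumMr sumMr sumrM.
by rewrite sumMr sumMr sumMr.
Qed.

Lemma mform_prod (f1 f2 f3 f4 : 'I_n -> R) x1 x2 x3 x4 :
  mform (fun i1 i2 i3 i4 => f1 i1 * f2 i2 * f3 i3 * f4 i4) x1 x2 x3 x4 =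
  (\sum_i f1 i * x1 i 0) * (\sum_i f2 i * x2 i 0) *
  (\sum_i f3 i * x3 i 0) * (\sum_i f4 i * x4 i 0).
Proof.
rewrite /mform -sum4_mul; do 4!(apply: eq_bigr => ? _); ring.
Qed.

Definition total x := \sum_i x i 0.
Definition mass L x := \sum_(i in L) x i 0.

Lemma massE L x : mass L x = \sum_i (i \in L)%:R * x i 0.
Proof.
rewrite /mass big_mkcond /=; apply: eq_bigr => i _.
by case: (i \in L); rewrite ?mul1r ?mul0r.
Qed.

Lemma massC L x : mass (~: L) x = total x - mass L x.
Proof.
rewrite /total (bigID (mem L)) /= addrC addrK /mass.
by apply: eq_bigl => i; rewrite in_setC.
Qed.

Definition cut_form L x1 x2 x3 x4 :=
  total x1 * total x2 * total x3 * total x4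
  - mass L x1 * mass L x2 * mass L x3 * mass L x4
  - mass (~: L) x1 * mass (~: L) x2 * mass (~: L) x3 * mass (~: L) x4.

Lemma splits4E L i1 i2 i3 i4 : (splits L [set i1; i2; i3; i4])%:R =
  1 - (i1 \in L)%:R * (i2 \in L)%:R * (i3 \in L)%:R * (i4 \in L)%:R
    - (i1 \in ~: L)%:R * (i2 \in ~: L)%:R * (i3 \in ~: L)%:R * (i4 \in ~: L)%:R :> R.
Proof.
have meet4 A : ([set i1; i2; i3; i4] :&: A != set0) =
    [|| i1 \in A, i2 \in A, i3 \in A | i4 \in A].
  apply/set0Pn/idP => [[i /setIP[]]|].
    by rewrite !inE -!orbA => /or4P[]/eqP-> ->; rewrite ?orbT.
  by case/or4P=> iA; [exists i1|exists i2|exists i3|exists i4];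
    rewrite inE iA !inE eqxx ?orbT.
rewrite /splits !meet4 !in_setC.
by case: (i1 \in L); case: (i2 \in L); case: (i3 \in L); case: (i4 \in L);
  rewrite /= ?mul1r ?mul0r ?subr0 ?subrr.
Qed.

Lemma cut_formE L x1 x2 x3 x4 :
  mform (fun i1 i2 i3 i4 => (splits L [set i1; i2; i3; i4])%:R) x1 x2 x3 x4 =
  cut_form L x1 x2 x3 x4.
Proof.
pose ind (A : {set 'I_n}) (i : 'I_n) : R := (i \in A)%:R.
rewrite (@eq_mform _ (fun i1 i2 i3 i4 => 1 * 1 * 1 * 1
     - ind L i1 * ind L i2 * ind L i3 * ind L i4
     - ind (~: L) i1 * ind (~: L) i2 * ind (~: L) i3 * ind (~: L) i4)); last first.
  by move=> i1 i2 i3 i4; rewrite splits4E !mul1r.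
have totalE x : \sum_i 1 * x i 0 = total x by apply: eq_bigr => i _; rewrite mul1r.
by rewrite !mformB !mform_prod !totalE /ind -!massE.
Qed.
(* The middle terms of the expansion of [(t + (1 - t)) ^+ 4], i.e.
   [1 - t ^+ 4 - (1 - t) ^+ 4]. *)
Definition mid4 (t : R) :=
  4 * t ^+ 3 * (1 - t) + 6 * t ^+ 2 * (1 - t) ^+ 2 + 4 * t * (1 - t) ^+ 3.

Definition edge_quartic (s a t : R) := 2 * s ^+ 4 * mid4 t + 4 * (a - s * t) ^+ 4.

Lemma cut_form_pair L (v w : 'cV[R]_n) t :
  total w = total v -> mass L w = 2 * total v * t - mass L v ->
  cut_form L v v v w + cut_form L v w w w = edge_quartic (total v) (mass L v) t.
Proof. by move=> tw mw; rewrite /cut_form !massC tw mw /edge_quartic /mid4; ring. Qed.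
End Forms.

Section TreeForms.
Variables (R : comRingType) (n : nat) (e : rel 'I_n).
Hypothesis tree_e : is_tree e.

Lemma steiner_form_cuts (x1 x2 x3 x4 : 'cV[R]_n) : steiner_form e x1 x2 x3 x4 =
  \sum_(k in edges e) cut_form (side e k.1 k.2) x1 x2 x3 x4.
Proof.
transitivity (mform (fun i1 i2 i3 i4 => \sum_(k in edges e)
    (splits (side e k.1 k.2) [set i1; i2; i3; i4])%:R) x1 x2 x3 x4).
  by apply: eq_mform => i1 i2 i3 i4; rewrite steiner_tree // card_sep_edgesE natr_sum.
by rewrite mform_sum; apply: eq_bigr => k _; rewrite cut_formE.
Qed.

(* The sides of the neighbours [y] of [z] partition the vertices other than [z]. *)
Lemma total_split z (x : 'cV[R]_n) :
  total x = x z 0 + \sum_(y | e z y) mass (side e y z) x.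
Proof.
have count i : \sum_(y | e z y) ((i \in side e y z)%:R : R) = (i != z)%:R.
  have [->|iz] := eqVneq i z.
    by apply: big1 => y ezy; rewrite (negPf (notin_side tree_e _)) // tree_sym.
  have [y0 ezy0 iy0] := side_neighbour_cover tree_e iz.
  rewrite (bigD1 y0) //= iy0 big1 ?addr0 // => y /andP[ezy yy0].
  case: (boolP (i \in side e y z)) => // iy.
  by rewrite (side_neighbour_eq tree_e ezy ezy0 iy iy0) eqxx in yy0.
have -> : \sum_(y | e z y) mass (side e y z) x = \sum_i (i != z)%:R * x i 0.
  under eq_bigr => y _ do rewrite massE.
  by rewrite exchange_big /=; apply: eq_bigr => i _; rewrite -big_distrl /= count.
rewrite /total (bigD1 z) //= [in RHS](bigD1 z) //= eqxx mul0r add0r.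
by congr (_ + _); apply: eq_bigr => i iz; rewrite iz mul1r.
Qed.

Lemma eq0_of_masses (x : 'cV[R]_n) : total x = 0 ->
  (forall k, k \in edges e -> mass (side e k.1 k.2) x = 0) -> x = 0.
Proof.
move=> t0 m0; apply/matrixP => i j; rewrite ord1 mxE.
suff sides0 y : e i y -> mass (side e y i) x = 0.
  by have := total_split i x; rewrite t0 big1 ?addr0 // => y /sides0.
move=> eiy; have [[a b] kE] := edge_of tree_e eiy.
rewrite /pair_set /= => /set2_eqP[][ai bi]; last by rewrite -ai -bi (m0 _ kE).
by rewrite (sideC tree_e eiy) massC t0 -ai -bi (m0 _ kE) subrr.
Qed.
End TreeForms.

Section Quartic.
Variable R : realDomainType.

Lemma mid4_ge0 (t : R) : 0 <= t <= 1 -> 0 <= mid4 t.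
Proof.
case/andP => t0 t1; have u0 : 0 <= 1 - t by rewrite subr_ge0.
by rewrite !addr_ge0 // !mulr_ge0 // ?exprn_ge0.
Qed.

Lemma mid4_gt0 (t : R) : 0 < t < 1 -> 0 < mid4 t.
Proof.
case/andP => t0 t1; have u0 : 0 < 1 - t by rewrite subr_gt0.
by rewrite /mid4 !addr_gt0 // !mulr_gt0 // ?exprn_gt0.
Qed.

Lemma edge_quartic_ge0 (s a t : R) : 0 <= t <= 1 -> 0 <= edge_quartic s a t.
Proof.
move=> t01; apply: addr_ge0; last by rewrite mulr_ge0 ?exprn_even_ge0.
by rewrite mulr_ge0 ?mid4_ge0 // mulr_ge0 ?exprn_even_ge0.
Qed.

Lemma edge_quartic_gt0 (s a t : R) :
  0 < t < 1 -> (s != 0) || (a != 0) -> 0 < edge_quartic s a t.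
Proof.
case/andP=> t0 t1 sa; rewrite /edge_quartic.
have mid0 : 0 < mid4 t by rewrite mid4_gt0 // t0 t1.
have [s0|s0] := eqVneq s 0.
  rewrite s0 eqxx /= in sa; rewrite s0 mul0r subr0 expr0n /= mulr0 mul0r add0r.
  by rewrite mulr_gt0 // exprn_even_gt0 // sa orbT.
apply: ltr_wpDr; first by rewrite mulr_ge0 // exprn_even_ge0.
by rewrite mulr_gt0 // mulr_gt0 // exprn_even_gt0 // s0 orbT.
Qed.
End Quartic.

Section Main.
Variables (R : realFieldType) (n : nat) (e : rel 'I_n).
Hypotheses (tree_e : is_tree e) (n_gt0 : (0 < n)%N).
Implicit Types (L : {set 'I_n}) (v : 'cV[R]_n).

Lemma matA_mulE v i : (matA R n *m v) i 0 = 2 / n%:R * total v - v i 0.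
Proof.
rewrite /matA mulmxBl mul1mx -scalemxAl !mxE /total; congr (_ * _ - _).
by apply: eq_bigr => j _; rewrite mxE mul1r.
Qed.

Lemma total_matA v : total (matA R n *m v) = total v.
Proof.
rewrite {1}/total; under eq_bigr do rewrite matA_mulE.
rewrite sumrB sumr_const card_ord -/(total v) -mulr_natr; field.
by rewrite pnatr_eq0 -lt0n.
Qed.

Lemma mass_matA L v :
  mass L (matA R n *m v) = 2 * total v * (#|L|%:R / n%:R) - mass L v.
Proof.
rewrite {1}/mass; under eq_bigr do rewrite matA_mulE.
by rewrite sumrB sumr_const -mulr_natr -/(mass L v); congr (_ - _); ring.
Qed.

Lemma side_ratio_bounds k : k \in edges e -> 0 < #|side e k.1 k.2|%:R / (n%:R : R) < 1.
Proof.
move=> /edge_rel exy.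
have p0 : (0 < #|side e k.1 k.2|)%N by apply/card_gt0P; exists k.1; exact: mem_side.
have pn : (#|side e k.1 k.2| < n)%N.
  rewrite -[X in (_ < X)%N]card_ord -cardsT; apply/proper_card; rewrite properT.
  by apply/eqP => sideT; move: (notin_side tree_e exy); rewrite sideT inE.
have n0 : 0 < (n%:R : R) by rewrite ltr0n (leq_ltn_trans (leq0n _) pn).
apply/andP; split; first by rewrite divr_gt0 // ltr0n.
by rewrite ltr_pdivrMr // mul1r ltr_nat.
Qed.

Lemma C1_add_C3 v : C1 e v v v v + C3 e v v v v =
  \sum_(k in edges e) edge_quartic (total v) (mass (side e k.1 k.2) v)
                                   (#|side e k.1 k.2|%:R / n%:R).
Proof.
rewrite /C1 /C3 !(steiner_form_cuts tree_e) -big_split; apply: eq_bigr => k _.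
by apply: cut_form_pair; [exact: total_matA | exact: mass_matA].
Qed.
End Main.

Unset Implicit Arguments.

Theorem mainTheorem14 (R : realFieldType) (n : nat) (e : rel 'I_n) :
  (3 <= n)%N -> is_tree e ->
  forall v : 'cV[R]_n, v != 0 -> 0 < C1 e v v v v + C3 e v v v v.
Proof.
move=> n3 tree_e v v0; rewrite (C1_add_C3 tree_e (leq_trans _ n3)) //.
suff [k kE qk] : exists2 k, k \in edges e & 0 < edge_quartic (total v)
    (mass (side e k.1 k.2) v) (#|side e k.1 k.2|%:R / n%:R).
  rewrite (bigD1 k) //=; apply: ltr_wpDr qk.
  apply: sumr_ge0 => i /andP[iE _]; apply: edge_quartic_ge0.
  by have /andP[t0 t1] := side_ratio_bounds R tree_e iE; rewrite !ltW.
have [s0|s0] := eqVneq (total v) 0.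
  have : ~~ [forall (k | k \in edges e), mass (side e k.1 k.2) v == 0].
    apply: contra v0 => /forall_inP m0.
    by apply/eqP/(eq0_of_masses tree_e s0) => k /m0/eqP.
  rewrite negb_forall_in => /exists_inP[k kE mk]; exists k => //.
  by apply: edge_quartic_gt0; [exact: side_ratio_bounds | rewrite mk orbT].
have [k kE] := exists_edge tree_e (leq_trans (isT : 1 < 3)%N n3); exists k => //.
by apply: edge_quartic_gt0; [exact: side_ratio_bounds | rewrite s0].
Qed.
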